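(* Let $m\ge 2$ and $\theta_c(\mathrm{Plu},m)=\frac{m-2}{3m-2}$. For $\theta\in(0,1]$: (i) if $\theta<\theta_c(\mathrm{Plu},m)$ then $\lim_{n\to\infty}\rho(\mathrm{Plu},m,n,\theta)=1$; (ii) if $\theta>\theta_c(\mathrm{Plu},m)$ then $\lim_{n\to\infty}\rho(\mathrm{Plu},m,n,\theta)=0$.
   Context: A ranking is a strict total order on the candidates. A discrete profile $P$ consists of candidates, $n$ voters, and a ranking $P_v$ per voter. Plurality ($\mathrm{Plu}$): each candidate $c$ gets score $s_{\mathrm{Plu}}(c,P)$ equal to the number (total weight) of voters ranking $c$ first; the winner is the candidate with the highest score, ties broken by an arbitrary fixed tie-breaking rule (the result holds for any such rule). CM: the rule $f$ is coalitionally manipulable in a discrete profile $P$ if there is a discrete profile $Q$ with the same candidates and voters such that $f(Q)\ne f(P)$ and every voter $v$ with $Q_v\ne P_v$ prefers $f(Q)$ to $f(P)$ according to $P_v$. Perturbed Culture with parameters $m,n\ge1$, $\theta\in(0,1]$: a random discrete profile with candidates $\{1,\dots,m\}$ and voters $\{1,\dots,n\}$, each voter independently having ranking $1\succ 2\succ\cdots\succ m$ with probability $\theta$ and a uniformly random ranking (among the $m!$) with probability $1-\theta$. The CM rate $\rho(f,m,n,\theta)$ is the probability that $f$ is CM in such a random profile. *)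

From HB Require Import structures.
From mathcomp Require Import all_boot all_order all_algebra all_fingroup.
From mathcomp Require Import all_classical all_reals all_analysis.
Set Implicit Arguments. Unset Strict Implicit. Unset Printing Implicit Defensive.
Import Order.TTheory GRing.Theory Num.Theory.
Local Open Scope ring_scope.

(* A ranking of the candidates 'I_m is a permutation r : {perm 'I_m}
   mapping each candidate to its position (0 = top). *)
Definition ranking (m : nat) := {perm 'I_m}.

Definition prefers (m : nat) (r : ranking m) (a b : 'I_m) : bool :=
  (val (r a) < val (r b))%N.

Definition profile (m n : nat) := {ffun 'I_n -> ranking m}.

Definition plu_score (m n : nat) (P : profile m n) (c : 'I_m) : nat :=
  #|[set v : 'I_n | val (P v c) == 0%N]|.

Definition plu_top (m n : nat) (P : profile m n) : {set 'I_m} :=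
  [set c | [forall d, (plu_score P d <= plu_score P c)%N]].

Definition tiebreak (m : nat) (tb : {set 'I_m} -> 'I_m) : Prop :=
  forall S : {set 'I_m}, S != finset.set0 -> tb S \in S.

Definition plu (m n : nat) (tb : {set 'I_m} -> 'I_m) (P : profile m n) : 'I_m :=
  tb (plu_top P).

Definition CM (m n : nat) (f : profile m n -> 'I_m) (P : profile m n) : bool :=
  [exists Q : profile m n,
     (f Q != f P) &&
     [forall v : 'I_n, (Q v != P v) ==> prefers (P v) (f Q) (f P)]].

(* probability of profile P under Perturbed Culture with parameter theta:
   each voter independently has the ranking 1 > 2 > ... > m (identity
   permutation) with probability theta, uniform ranking with prob 1 - theta *)
Definition pc_prob (R : realType) (m n : nat) (theta : R) (P : profile m n) : R :=
  \prod_(v : 'I_n) (theta * (P v == 1%g)%:R + (1 - theta) / (m`!)%:R).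

Definition cm_rate (R : realType) (m n : nat) (tb : {set 'I_m} -> 'I_m)
  (theta : R) : R :=
  \sum_(P : profile m n | CM (@plu m n tb) P) pc_prob theta P.

Definition theta_c_plu (R : realType) (m : nat) : R :=
  (m%:R - 2) / (3 * m%:R - 2).

(* Under Perturbed Culture the ballots are i.i.d.; write a and b for the
   candidates ranked first and second by the perturbing ranking.  Plurality is
   not manipulable as soon as, for every c <> a, more voters rank a first than
   prefer c to a: a wins, and a coalition for c can only recruit voters
   preferring c to a, while a keeps all its first places.  It is manipulable as
   soon as a has strictly the most first places and, for every d <> b, the
   voters preferring b to a outnumber the first places of d: they all put b
   first.  Per voter, a is ranked first with probability theta + (1-theta)/m,
   any other d with probability (1-theta)/m, and c is preferred to a with
   probability (1-theta)/2, so the first condition holds on average exactly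
   when theta > theta_c and the second exactly when theta < theta_c.  Each
   condition is the positivity of finitely many sums of n i.i.d. bounded
   variables with positive mean, which by Chebyshev's inequality and a union
   bound fails with probability O(1/n). *)

From mathcomp Require Import all_boot all_order all_algebra all_fingroup.
From mathcomp Require Import all_classical all_reals all_analysis.
From mathcomp Require Import ring lra.
Import Order.TTheory GRing.Theory Num.Theory.
Import numFieldNormedType.Exports.
Set Implicit Arguments.
Unset Strict Implicit.

Local Open Scope ring_scope.

Lemma ler_sum_subpred (R : numDomainType) (I : finType) (A B : pred I)
    (w : I -> R) :
  (forall i, 0 <= w i) -> (forall i, A i -> B i) ->
  \sum_(i | A i) w i <= \sum_(i | B i) w i.
Proof.
move=> w_ge0 AB; rewrite [leLHS]big_mkcond [leRHS]big_mkcond /=.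
apply: ler_sum => i _; case: ifP => [/AB -> //|_].
by case: ifP.
Qed.

Lemma ler_sum_exists (R : numDomainType) (I J : finType) (A : pred I)
    (B : I -> pred J) (w : J -> R) :
  (forall j, 0 <= w j) ->
  \sum_(j | [exists i, A i && B i j]) w j <= \sum_(i | A i) \sum_(j | B i j) w j.
Proof.
move=> w_ge0.
rewrite (exchange_big_dep (fun j => [exists i, A i && B i j])) /=; last first.
  by move=> i j Ai Bij; apply/existsP; exists i; rewrite Ai.
apply: ler_sum => j /existsP[i ABi].
by rewrite (bigD1 i) //= lerDl sumr_ge0.
Qed.

Lemma prodr_if2 (R : comPzRingType) n (v w : 'I_n) (a b : 'I_n -> R) :
  v != w ->
  \prod_u (if u == v then a u else if u == w then b u else 1) = a v * b w.
Proof.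
move=> vw; have wv : w != v by rewrite eq_sym.
rewrite (bigD1 v) //= eqxx (bigD1 w) /=; last by rewrite wv.
rewrite (negbTE wv) eqxx.
by rewrite big1 ?mulr1 // => u /andP[/negbTE -> /negbTE ->].
Qed.

Lemma cvg0_le_div (R : realType) (x : nat -> R) (K : R) :
  (forall n, (0 < n)%N -> 0 <= x n <= K / n%:R) -> (x @ \oo --> 0)%classic.
Proof.
move=> xK; apply/cvgrPdist_le => e e0; near=> n.
have n0 : (0 < n)%N by near: n; exact: nbhs_infty_ge 1%N.
have /andP[x0 xle] := xK n n0.
rewrite sub0r normrN ger0_norm //; apply: le_trans xle _.
rewrite ler_pdivrMr ?ltr0n // mulrC -ler_pdivrMr //.
by near: n; exact: nbhs_infty_ger.
Unshelve. all: by end_near. Qed.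

Section IidProduct.
Variables (R : realType) (T : finType) (p : T -> R).
Hypotheses (p_ge0 : forall x, 0 <= p x) (p_sum1 : \sum_x p x = 1).

Definition wmean (g : T -> R) : R := \sum_x p x * g x.

Definition wvar (g : T -> R) : R := wmean (fun x => (g x - wmean g) ^+ 2).

Definition iid_weight {n} (P : {ffun 'I_n -> T}) : R := \prod_v p (P v).

Lemma wmeanB f g : wmean (fun x => f x - g x) = wmean f - wmean g.
Proof. by rewrite -sumrB; apply: eq_bigr => x _; rewrite mulrBr. Qed.

Lemma wmean_cst c : wmean (fun _ => c) = c.
Proof. by rewrite /wmean -mulr_suml p_sum1 mul1r. Qed.

Lemma iid_weight_ge0 n (P : {ffun 'I_n -> T}) : 0 <= iid_weight P.
Proof. exact: prodr_ge0. Qed.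

Lemma sum_iid_weight_prod n (F : 'I_n -> T -> R) :
  \sum_(P : {ffun 'I_n -> T}) iid_weight P * \prod_v F v (P v)
  = \prod_v wmean (F v).
Proof.
rewrite /wmean bigA_distr_bigA /=; apply: eq_bigr => P _.
by rewrite -big_split.
Qed.

Lemma sum_iid_weight n : \sum_(P : {ffun 'I_n -> T}) iid_weight P = 1.
Proof.
transitivity (\prod_(v : 'I_n) wmean (fun _ => 1)).
  by rewrite -sum_iid_weight_prod; apply: eq_bigr => P _; rewrite big1 ?mulr1.
by rewrite big1 // => v _; rewrite wmean_cst.
Qed.

Lemma sum_iid_weight_predC n (B : pred {ffun 'I_n -> T}) :
  \sum_(P | ~~ B P) iid_weight P = 1 - \sum_(P | B P) iid_weight P.
Proof.
by rewrite -(@sum_iid_weight n) [in RHS](bigID B) /= addrAC subrr add0r.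
Qed.

Lemma iid_expect_coord n (v : 'I_n) (f : T -> R) :
  \sum_(P : {ffun 'I_n -> T}) iid_weight P * f (P v) = wmean f.
Proof.
pose F u := if u == v then f else fun _ => 1.
have prodF (a : 'I_n -> R) : \prod_u (if u == v then a u else 1) = a v.
  by rewrite -big_mkcond big_pred1_eq.
transitivity (\sum_(P : {ffun 'I_n -> T}) iid_weight P * \prod_u F u (P u)).
  by apply: eq_bigr => P _; rewrite -(prodF (fun u => f (P u))) /F;
     congr (_ * _); apply: eq_bigr => u _; case: eqP.
rewrite sum_iid_weight_prod -(prodF (fun _ => wmean f)).
by apply: eq_bigr => u _; rewrite /F; case: eqP => // _; rewrite wmean_cst.
Qed.

Lemma iid_expect_pair n (v w : 'I_n) (f g : T -> R) : v != w ->
  \sum_(P : {ffun 'I_n -> T}) iid_weight P * (f (P v) * g (P w))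
  = wmean f * wmean g.
Proof.
move=> vw; pose F u := if u == v then f else if u == w then g else fun _ => 1.
transitivity (\sum_(P : {ffun 'I_n -> T}) iid_weight P * \prod_u F u (P u)).
  apply: eq_bigr => P _.
  rewrite -(prodr_if2 (fun u => f (P u)) (fun u => g (P u)) vw) /F.
  by congr (_ * _); apply: eq_bigr => u _; case: eqP => _ //; case: eqP.
rewrite sum_iid_weight_prod -(prodr_if2 (fun _ => wmean f) (fun _ => wmean g) vw).
by apply: eq_bigr => u _; rewrite /F; case: eqP => // _; case: eqP => // _;
   rewrite wmean_cst.
Qed.

Lemma iid_second_moment n (Y : T -> R) : wmean Y = 0 ->
  \sum_(P : {ffun 'I_n -> T}) iid_weight P * (\sum_v Y (P v)) ^+ 2
  = n%:R * wmean (fun x => Y x ^+ 2).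
Proof.
move=> Y0.
transitivity (\sum_(v : 'I_n) \sum_(w : 'I_n)
    \sum_(P : {ffun 'I_n -> T}) iid_weight P * (Y (P v) * Y (P w))).
  under eq_bigr do rewrite expr2 big_distrlr mulr_sumr.
  rewrite exchange_big; apply: eq_bigr => v _.
  under eq_bigr do rewrite mulr_sumr.
  by rewrite exchange_big.
rewrite mulr_natl -[in RHS](card_ord n) -sumr_const; apply: eq_bigr => v _.
rewrite (bigD1 v) //= [X in _ + X]big1 => [|w wv]; last first.
  by rewrite iid_expect_pair 1?eq_sym // Y0 mul0r.
rewrite addr0 -(iid_expect_coord v (fun x => Y x ^+ 2)).
by apply: eq_bigr => P _; rewrite expr2.
Qed.

Lemma iid_sum_nonpos_le n (h : T -> R) : 0 < wmean h -> (0 < n)%N ->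
  \sum_(P : {ffun 'I_n -> T} | \sum_v h (P v) <= 0) iid_weight P
  <= wvar h / wmean h ^+ 2 / n%:R.
Proof.
move=> mu_gt0 n_gt0; set mu := wmean h.
have nmu_gt0 : 0 < n%:R * mu by rewrite mulr_gt0 ?ltr0n.
pose dev (P : {ffun 'I_n -> T}) :=
  (\sum_v (h (P v) - mu)) ^+ 2 / (n%:R * mu) ^+ 2.
have devE (P : {ffun 'I_n -> T}) :
    \sum_v (h (P v) - mu) = \sum_v h (P v) - n%:R * mu.
  by rewrite sumrB sumr_const card_ord mulr_natl.
have dev_ge1 (P : {ffun 'I_n -> T}) : \sum_v h (P v) <= 0 -> 1 <= dev P.
  rewrite /dev ler_pdivlMr ?exprn_gt0 // mul1r devE.
  by move: (\sum_v h (P v)) (n%:R * mu) nmu_gt0 => s a a_gt0 s_le0; nra.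
apply: (@le_trans _ _ (\sum_(P : {ffun 'I_n -> T}) iid_weight P * dev P)).
  apply: le_trans (ler_sum_subpred _ (fun P _ => isT)).
    apply: ler_sum => P /dev_ge1 le1dev.
    by rewrite -{1}[iid_weight P]mulr1 ler_wpM2l ?iid_weight_ge0.
  by move=> P; rewrite mulr_ge0 ?iid_weight_ge0 ?divr_ge0 ?sqr_ge0.
under eq_bigr do rewrite mulrA.
rewrite -mulr_suml (@iid_second_moment n (fun x => h x - mu)); last first.
  by rewrite wmeanB wmean_cst subrr.
rewrite /wvar -/mu exprMn le_eqVlt; apply/orP; left; apply/eqP; field.
by rewrite pnatr_eq0 -lt0n n_gt0 lt0r_neq0.
Qed.

Lemma iid_some_sum_nonpos_le (I : finType) (A : pred I) (h : I -> T -> R) n :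
  (forall i, A i -> 0 < wmean (h i)) -> (0 < n)%N ->
  \sum_(P : {ffun 'I_n -> T} | [exists i, A i && (\sum_v h i (P v) <= 0)])
    iid_weight P
  <= (\sum_(i | A i) wvar (h i) / wmean (h i) ^+ 2) / n%:R.
Proof.
move=> h_gt0 n_gt0; apply: le_trans (ler_sum_exists _ _ (@iid_weight_ge0 n)) _.
by rewrite mulr_suml; apply: ler_sum => i /h_gt0 /iid_sum_nonpos_le; apply.
Qed.

Lemma iid_some_sum_nonpos_cvg0 (I : finType) (A : pred I) (h : I -> T -> R) :
  (forall i, A i -> 0 < wmean (h i)) ->
  ((fun n => \sum_(P : {ffun 'I_n -> T} |
                    [exists i, A i && (\sum_v h i (P v) <= 0)]) iid_weight P)
     @ \oo --> 0)%classic.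
Proof.
move=> h_gt0; pose K := \sum_(i | A i) wvar (h i) / wmean (h i) ^+ 2.
apply: (@cvg0_le_div _ _ K) => n n_gt0.
by rewrite iid_some_sum_nonpos_le // andbT sumr_ge0 // => P _; exact: iid_weight_ge0.
Qed.

Lemma iid_all_sums_pos_cvg1 (I : finType) (A : pred I) (h : I -> T -> R) :
  (forall i, A i -> 0 < wmean (h i)) ->
  ((fun n => \sum_(P : {ffun 'I_n -> T} |
                    ~~ [exists i, A i && (\sum_v h i (P v) <= 0)]) iid_weight P)
     @ \oo --> (1 : R))%classic.
Proof.
move=> h_gt0; rewrite (eq_cvg _ _ (fun n => sum_iid_weight_predC _)).
have := cvgB (cvg_cst (1 : R)) (iid_some_sum_nonpos_cvg0 h_gt0).
rewrite subr0; apply.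
Qed.

End IidProduct.

Definition gap (R : pzRingType) (T : Type) (a b : pred T) (x : T) : R :=
  (a x)%:R - (b x)%:R.

Lemma sum_gap_gt0 (R : realType) (T : finType) n (P : {ffun 'I_n -> T})
    (a b : pred T) :
  (0 < \sum_v gap R a b (P v)) = (#|[set v | b (P v)]| < #|[set v | a (P v)]|)%N.
Proof.
have cardE (c : pred T) : \sum_v ((c (P v))%:R : R) = #|[set v | c (P v)]|%:R.
  rewrite -sum1_card natr_sum [RHS]big_mkcond /=.
  by apply: eq_bigr => v _; rewrite inE; case: (c (P v)).
by rewrite sumrB !cardE subr_gt0 ltr_nat.
Qed.

Definition ranks_first m (c : 'I_m) : pred (ranking m) :=
  fun r => val (r c) == 0%N.

Lemma card_ranks_first m (d : 'I_m) :
  (m * #|[set r : ranking m | ranks_first d r]|)%N = m`!.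
Proof.
pose S d' := [set r : ranking m | ranks_first d' r].
have cardS d' : #|S d'| = #|S d|.
  rewrite -(card_preimset (S d) (mulgI (tperm d d'))); apply: eq_card => r.
  by rewrite !inE /ranks_first permM tpermL.
transitivity (\sum_(d' : 'I_m) #|S d'|)%N.
  by rewrite (eq_bigr _ (fun d' _ => cardS d')) sum_nat_const card_ord.
have cardE (A : {set ranking m}) : #|A| = (\sum_r (r \in A))%N.
  by rewrite -sum1_card big_mkcond /=; apply: eq_bigr => r _; case: (r \in A).
rewrite -card_Sn (eq_bigr _ (fun d' _ => cardE (S d'))) exchange_big -sum1_card.
apply: eq_bigr => r _.
pose o := Ordinal (leq_ltn_trans (leq0n d) (ltn_ord d)).
rewrite (bigD1 (r^-1 o)%g) //= inE /ranks_first permKV eqxx big1 // => i.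
move=> i_neq; apply/eqP; rewrite eqb0 inE; apply: contra i_neq => /eqP r_i0.
by apply/eqP; rewrite -(permK r i); congr (_ _); apply: val_inj.
Qed.

Lemma card_prefers m (c c' : 'I_m) : c != c' ->
  (2 * #|[set r : ranking m | prefers r c c']|)%N = m`!.
Proof.
move=> cc'; pose S a b := [set r : ranking m | prefers r a b].
have cardS : #|S c c'| = #|S c' c|.
  rewrite -(card_preimset (S c' c) (mulgI (tperm c c'))); apply: eq_card => r.
  by rewrite !inE /prefers !permM tpermL tpermR.
have S_compl : ~: S c c' = S c' c.
  apply/setP => r; rewrite !inE /prefers -leqNgt leq_eqVlt.
  suff /negbTE-> : val (r c') != val (r c) by [].
  by apply: contra cc' => /eqP/val_inj/perm_inj ->.
by rewrite mul2n -addnn {2}cardS -S_compl cardsC card_Sn.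
Qed.

Definition pc_weight (R : realType) m (theta : R) (r : ranking m) : R :=
  theta * (r == 1%g)%:R + (1 - theta) / (m`!)%:R.

Section PerturbedCultureMoments.
Variables (R : realType) (m : nat) (theta : R).

Lemma wmean_pc_weight (g : ranking m -> R) :
  wmean (pc_weight theta) g
  = theta * g 1%g + (1 - theta) / (m`!)%:R * \sum_r g r.
Proof.
rewrite /wmean /pc_weight; under eq_bigr do rewrite mulrDl.
rewrite big_split /= -mulr_sumr; congr (_ + _).
rewrite (bigD1 1%g) //= eqxx mulr1 big1 ?addr0 // => r /negbTE ->.
by rewrite mulr0 mul0r.
Qed.

Lemma wmean_pc_indicator (A : {set ranking m}) :
  wmean (pc_weight theta) (fun r => (r \in A)%:R)
  = theta * (1%g \in A)%:R + (1 - theta) * #|A|%:R / (m`!)%:R.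
Proof.
rewrite wmean_pc_weight [in LHS]mulrAC; congr (_ + _ * _ * _).
rewrite -sum1_card natr_sum [RHS]big_mkcond /=.
by apply: eq_bigr => r _; case: (r \in A).
Qed.

Lemma wmean_pc_ranks_first (d : 'I_m) :
  wmean (pc_weight theta) (fun r => (ranks_first d r)%:R)
  = theta * (val d == 0%N)%:R + (1 - theta) / m%:R.
Proof.
pose S := [set r : ranking m | ranks_first d r].
transitivity (wmean (pc_weight theta) (fun r => (r \in S)%:R)).
  by apply: eq_bigr => r _; rewrite inE.
have := fact_gt0 m; rewrite -(card_ranks_first d) muln_gt0 => /andP[m_gt0 S_gt0].
rewrite wmean_pc_indicator inE /ranks_first perm1 -(card_ranks_first d) natrM.
by congr (_ + _); field; rewrite !pnatr_eq0 -!lt0n m_gt0 S_gt0.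
Qed.

Lemma wmean_pc_prefers (c c' : 'I_m) : c != c' ->
  wmean (pc_weight theta) (fun r => (prefers r c c')%:R)
  = theta * (val c < val c')%:R + (1 - theta) / 2.
Proof.
move=> cc'; pose S := [set r : ranking m | prefers r c c'].
transitivity (wmean (pc_weight theta) (fun r => (r \in S)%:R)).
  by apply: eq_bigr => r _; rewrite inE.
have := fact_gt0 m; rewrite -(card_prefers cc') muln_gt0 => /andP[_ S_gt0].
rewrite wmean_pc_indicator inE /prefers !perm1 -(card_prefers cc') natrM.
by congr (_ + _); field; rewrite pnatr_eq0 -lt0n S_gt0.
Qed.

Lemma pc_weight_sum1 : \sum_(r : ranking m) pc_weight theta r = 1.
Proof.
have := wmean_pc_indicator [set: ranking m]; rewrite /wmean.
under eq_bigr do rewrite inE mulr1.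
by rewrite inE cardsT card_Sn mulfK ?pnatr_eq0 -?lt0n ?fact_gt0 // mulr1 subrKC.
Qed.

Hypothesis theta01 : 0 <= theta <= 1.

Lemma pc_weight_ge0 (r : ranking m) : 0 <= pc_weight theta r.
Proof.
case/andP: theta01 => t0 t1.
by rewrite addr_ge0 ?mulr_ge0 ?divr_ge0 ?subr_ge0.
Qed.

Lemma iid_pc_weight_ge0 n (P : profile m n) :
  0 <= iid_weight (pc_weight theta) P.
Proof. exact: (@iid_weight_ge0 _ {perm 'I_m} _ pc_weight_ge0). Qed.

End PerturbedCultureMoments.

Section PluralityManipulation.
Variables (m n : nat) (tb : {set 'I_m} -> 'I_m).
Hypothesis tb_ok : tiebreak tb.

Lemma plu_in_top (P : profile m n) : (0 < m)%N -> plu tb P \in plu_top P.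
Proof.
move=> m_gt0; apply: tb_ok; apply/set0Pn.
have [c _ c_max] := @arg_maxnP _ (Ordinal m_gt0) xpredT (plu_score P) isT.
by exists c; rewrite inE; apply/forallP => d; exact: c_max.
Qed.

Lemma plu_strict_max (P : profile m n) (c : 'I_m) :
  (forall d, d != c -> (plu_score P d < plu_score P c)%N) -> plu tb P = c.
Proof.
move=> c_max; have m_gt0 := leq_ltn_trans (leq0n c) (ltn_ord c).
have /[!inE] /forallP/(_ c) := plu_in_top P m_gt0.
by apply: contraTeq => /c_max; rewrite ltnNge.
Qed.

Lemma prefers_ranks_first (r : ranking m) (c c' : 'I_m) :
  c != c' -> ranks_first c r -> prefers r c c'.
Proof.
move=> cc' /eqP r_c0; rewrite /prefers r_c0 lt0n.
apply: contra cc' => /eqP r_c'0.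
by apply/eqP/(@perm_inj _ r)/val_inj; rewrite r_c0 r_c'0.
Qed.

Lemma plu_not_CM (P : profile m n) (a : 'I_m) :
  (forall c, c != a -> (#|[set v | prefers (P v) c a]| < plu_score P a)%N) ->
  ~~ CM (@plu m n tb) P.
Proof.
move=> a_safe.
have wP : plu tb P = a.
  apply: plu_strict_max => d da; apply: leq_ltn_trans (a_safe d da).
  apply/subset_leq_card/fintype.subsetP => v /[!inE].
  exact: prefers_ranks_first.
apply/existsP => -[Q /andP[]]; rewrite wP.
set c := plu tb Q => ca /forallP Q_pref.
have /[!inE] /forallP/(_ a) := plu_in_top Q (leq_ltn_trans (leq0n a) (ltn_ord a)).
rewrite -/c; apply/negP; rewrite -ltnNge.
have le_c : (plu_score Q c <= #|[set v | prefers (P v) c a]|)%N.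
  apply/subset_leq_card/fintype.subsetP => v /[!inE] Qv_c; have := Q_pref v.
  by case: eqP => [<- _|_ //]; exact: prefers_ranks_first.
have le_a : (plu_score P a <= plu_score Q a)%N.
  apply/subset_leq_card/fintype.subsetP => v /[!inE] /eqP Pv_a.
  have := Q_pref v.
  by case: eqP => [-> _|_]; rewrite ?Pv_a // /prefers Pv_a ltn0.
exact: leq_ltn_trans le_c (leq_trans (a_safe c ca) le_a).
Qed.

Lemma plu_CM (P : profile m n) (a b : 'I_m) : a != b ->
  (forall d, d != a -> (plu_score P d < plu_score P a)%N) ->
  (forall d, d != b -> (plu_score P d < #|[set v | prefers (P v) b a]|)%N) ->
  CM (@plu m n tb) P.
Proof.
move=> ab a_max b_max.
pose s : ranking m := tperm b (Ordinal (leq_ltn_trans (leq0n a) (ltn_ord a))).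
have s_b : ranks_first b s by rewrite /ranks_first tpermL.
pose Q : profile m n := [ffun v => if prefers (P v) b a then s else P v].
have Q_other d : d != b -> (plu_score Q d <= plu_score P d)%N.
  move=> db; apply/subset_leq_card/fintype.subsetP => v /[!inE]; rewrite ffunE.
  case: ifP => // _ /eqP s_d; case/negP: db; apply/eqP/(@perm_inj _ s)/val_inj.
  by rewrite s_d (eqP s_b).
have Q_b : (#|[set v | prefers (P v) b a]| <= plu_score Q b)%N.
  apply/subset_leq_card/fintype.subsetP => v /[!inE] pref.
  by rewrite ffunE pref.
have wQ : plu tb Q = b.
  apply: plu_strict_max => d db.
  exact: leq_ltn_trans (Q_other d db) (leq_trans (b_max d db) Q_b).
apply/existsP; exists Q; rewrite wQ (plu_strict_max a_max) eq_sym ab /=.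
by apply/forallP => v; rewrite ffunE; case: ifP; rewrite ?implybT ?eqxx.
Qed.

End PluralityManipulation.

Lemma lt_theta_c_plu (R : realType) m (theta : R) : (2 <= m)%N ->
  (theta_c_plu R m < theta) = (m%:R - 2 < theta * (3 * m%:R - 2)).
Proof.
move=> m2; have : 2 <= m%:R :> R by rewrite (ler_nat R 2).
by move=> m2R; rewrite /theta_c_plu ltr_pdivrMr //; lra.
Qed.

Lemma gt_theta_c_plu (R : realType) m (theta : R) : (2 <= m)%N ->
  (theta < theta_c_plu R m) = (theta * (3 * m%:R - 2) < m%:R - 2).
Proof.
move=> m2; have : 2 <= m%:R :> R by rewrite (ler_nat R 2).
by move=> m2R; rewrite /theta_c_plu ltr_pdivlMr //; lra.
Qed.

Lemma cm_rateE (R : realType) m n (tb : {set 'I_m} -> 'I_m) (theta : R) :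
  cm_rate n tb theta
  = \sum_(P : profile m n | CM (@plu m n tb) P) iid_weight (pc_weight theta) P.
Proof. by []. Qed.

Lemma cm_rate_cvg0 (R : realType) m (tb : {set 'I_m} -> 'I_m) (theta : R) :
  (2 <= m)%N -> tiebreak tb -> theta <= 1 -> theta_c_plu R m < theta ->
  ((fun n => cm_rate n tb theta) @ \oo --> (0 : R))%classic.
Proof.
move=> m2 tb_ok theta_le1 theta_gt.
have m2R : 2 <= m%:R :> R by rewrite (ler_nat R 2).
have theta01 : 0 <= theta <= 1.
  by rewrite theta_le1 andbT; move: theta_gt; rewrite lt_theta_c_plu //; nra.
pose a : 'I_m := Ordinal (ltnW m2).
pose h (c : 'I_m) := gap R (ranks_first a) (fun r => prefers r c a).
have h_gt0 c : c != a -> 0 < wmean (pc_weight theta) (h c).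
  move=> ca; rewrite /h /gap wmeanB wmean_pc_ranks_first wmean_pc_prefers //=.
  have -> : theta * 1 + (1 - theta) / m%:R - (theta * 0 + (1 - theta) / 2)
      = (theta * (3 * m%:R - 2) - (m%:R - 2)) / (2 * m%:R).
    by field; apply: lt0r_neq0; lra.
  by rewrite divr_gt0 ?subr_gt0 -?lt_theta_c_plu //; lra.
have tail_cvg0 := iid_some_sum_nonpos_cvg0 (pc_weight_ge0 theta01)
  (pc_weight_sum1 m theta) h_gt0.
apply: (squeeze_cvgr _ (cvg_cst (0 : R)) tail_cvg0).
have w_ge0 := iid_pc_weight_ge0 theta01.
near=> n; rewrite cm_rateE sumr_ge0 /=; last by move=> P _; exact: w_ge0.
apply: ler_sum_subpred => [P|P]; first exact: w_ge0.
apply: contraTT => /existsPn h_pos.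
apply: (plu_not_CM (a := a) tb_ok) => c ca.
by have := h_pos c; rewrite ca -ltNge sum_gap_gt0.
Unshelve. all: by end_near.
Qed.

Lemma cm_rate_cvg1 (R : realType) m (tb : {set 'I_m} -> 'I_m) (theta : R) :
  (2 <= m)%N -> tiebreak tb -> 0 < theta -> theta < theta_c_plu R m ->
  ((fun n => cm_rate n tb theta) @ \oo --> (1 : R))%classic.
Proof.
move=> m2 tb_ok theta_gt0 theta_lt.
have m2R : 2 <= m%:R :> R by rewrite (ler_nat R 2).
have theta_m : theta * (3 * m%:R - 2) < m%:R - 2 by rewrite -gt_theta_c_plu.
have theta01 : 0 <= theta <= 1 by rewrite ltW //=; nra.
pose a : 'I_m := Ordinal (ltnW m2).
pose b : 'I_m := Ordinal m2.
pose A (i : 'I_m + 'I_m) := match i with inl d => d != a | inr d => d != b end.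
pose h (i : 'I_m + 'I_m) := match i with
  | inl d => gap R (ranks_first a) (ranks_first d)
  | inr d => gap R (fun r => prefers r b a) (ranks_first d) end.
have h_gt0 i : A i -> 0 < wmean (pc_weight theta) (h i).
  case: i => d /= Ad; rewrite /gap wmeanB !wmean_pc_ranks_first; last first.
    rewrite wmean_pc_prefers //= -[val d == 0%N]/(d == a).
    have m_neq0 : m%:R != 0 :> R by apply: lt0r_neq0; lra.
    case: (d == a) => /=.
      have -> : theta * 0 + (1 - theta) / 2 - (theta * 1 + (1 - theta) / m%:R)
          = ((m%:R - 2) - theta * (3 * m%:R - 2)) / (2 * m%:R) by field.
      by rewrite divr_gt0 ?subr_gt0 //; lra.
    have -> : theta * 0 + (1 - theta) / 2 - (theta * 0 + (1 - theta) / m%:R)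
        = ((1 - theta) * (m%:R - 2)) / (2 * m%:R) by field.
    by rewrite divr_gt0 ?mulr_gt0 ?subr_gt0 //; nra.
  by rewrite /= -[val d == 0%N]/(d == a) (negbTE Ad) mulr1 mulr0 add0r addrK.
have w_ge0 := iid_pc_weight_ge0 theta01.
have pos_cvg1 := iid_all_sums_pos_cvg1 (pc_weight_ge0 theta01)
  (pc_weight_sum1 m theta) h_gt0.
apply: (squeeze_cvgr _ pos_cvg1 (cvg_cst (1 : R))).
near=> n; rewrite cm_rateE; apply/andP; split.
  apply: ler_sum_subpred => [P|P]; first exact: w_ge0.
  move=> /existsPn h_pos.
  apply: (plu_CM (a := a) (b := b) tb_ok) => // d Ad.
    by have := h_pos (inl d); rewrite /= Ad /= -ltNge sum_gap_gt0.
  by have := h_pos (inr d); rewrite /= Ad /= -ltNge sum_gap_gt0.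
rewrite -(sum_iid_weight (pc_weight_sum1 m theta) n).
by apply: ler_sum_subpred => // P; exact: w_ge0.
Unshelve. all: by end_near.
Qed.

Unset Implicit Arguments.
Set Strict Implicit.
Local Open Scope classical_set_scope.
Local Open Scope ring_scope.

Theorem theorem3p3 (R : realType) (m : nat) (tb : {set 'I_m} -> 'I_m)
  (theta : R) :
  (2 <= m)%N -> tiebreak tb -> 0 < theta -> theta <= 1 ->
  (theta < theta_c_plu R m ->
     (fun n : nat => cm_rate n tb theta) @ \oo --> (1 : R)) /\
  (theta_c_plu R m < theta ->
     (fun n : nat => cm_rate n tb theta) @ \oo --> (0 : R)).
Proof.
move=> m2 tb_ok theta_gt0 theta_le1.
by split; [exact: cm_rate_cvg1 | exact: cm_rate_cvg0].
Qed.
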